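(* Let $T<\infty$ and define $(V_t,S_t)_{t\le T}$ and $J_t$ (on $\{t<T_e\}$) by the backward recursion: $V_T=G_T$, $S_T=1_{D_T}$, and for $t=T-1,\dots,0$, $J_t=E[S_{t+1}V_{t+1}\mid\mathcal{F}_t]/E[S_{t+1}\mid\mathcal{F}_t]$ on $\{t<T_e\}$, with $V_t=G_t,S_t=1$ on $\{t<T_e, G_t\ge J_t\}$; $V_t=J_t, S_t=E[S_{t+1}\mid\mathcal{F}_t]$ on $\{t<T_e,G_t<J_t\}$; $V_t=G_t, S_t=1_{D_t}$ on $\{t\ge T_e\}$. Let $\theta_t=1_{\{G_t\ge V_t\}}$. Then $\theta$ is admissible, \[ J_t=J_t(\theta)\quad\text{and}\quad E[S_{t+1}\mid\mathcal{F}_t]=P(\mathcal{L}_t\theta\lhd\sigma\mid\mathcal{F}_t)\quad\text{on }\{t<T_e\}, \] and for all $t\le T$, \[ S_t=\begin{cases}P(\mathcal{L}_t\theta\lhd\sigma\mid\mathcal{F}_t)&\text{on } D_t\cap\{\theta_t=0\},\\ 1&\text{on } D_t\cap\{\theta_t=1\},\\ 0 & \text{on } D_t^c.\end{cases} \]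
   Context: Let $T\in\mathbb{N}$ and $\mathbb{T}=\{0,1,\dots,T\}$. Let $(\Omega,\mathcal{F},P)$ be a probability space with a filtration $(\mathcal{F}_t)_{t\le T}$, $\mathcal{F}_0$ trivial. Let $\sigma$ be a stopping time with values in $\{0,1,2,\dots\}\cup\{\infty\}$ and $P(\sigma>0)=1$; set $D_t=\{t<\sigma\}$. Let $G=(G_t)_{t\le T}$ be an adapted payoff process; on $D_t^c$ one sets $G_t=\Delta$, an auxiliary symbol with the convention $0\cdot\Delta=0$. Standing assumption: $E[\sup_{t\le T}|G_t|1_{D_t}]<\infty$. For $s,t\in[0,\infty]$ write $s\lhd t$ iff $s<t$ or $t=\infty$. Convention: $\inf\emptyset=\infty$. The effective horizon is $T_e=T\wedge\inf\{0\le t<T: P(D_{t+1}\mid\mathcal{F}_t)=0\}$. A stopping policy is a $\{0,1\}$-valued adapted process $\theta=(\theta_t)_{t\in\mathbb{T}}$, and $\mathcal{L}_t\theta=\inf\{s>t:\theta_s=1\}$. $\theta$ is admissible if $P(\mathcal{L}_t\theta\lhd\sigma\mid\mathcal{F}_t)>0$ on $\{t<T_e\}$ and $\theta_t=1$ on $\{t\ge T_e\}$. For admissible $\theta$, on $\{t<T_e\}$, $J_t(\theta)=E[G_{\mathcal{L}_t\theta}1_{\{\mathcal{L}_t\theta\lhd\sigma\}}\mid\mathcal{F}_t]/P(\mathcal{L}_t\theta\lhd\sigma\mid\mathcal{F}_t)$. *)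

From HB Require Import structures.
From mathcomp Require Import all_boot all_order all_algebra.
From mathcomp Require Import all_classical all_reals all_analysis.
Set Implicit Arguments. Unset Strict Implicit. Unset Printing Implicit Defensive.
Import Order.TTheory GRing.Theory Num.Theory.
Local Open Scope classical_set_scope.
Local Open Scope ring_scope.

(** Times in {0,1,2,...} ∪ {∞}: [Some n] is n, [None] is ∞. *)

Definition lt_opt (t : nat) (s : option nat) : bool :=
  match s with None => true | Some b => (t < b)%N end.

Definition lhd (s u : option nat) : bool :=
  match u with
  | None => true
  | Some b => match s with Some a => (a < b)%N | None => false end
  end.

Definition Dset (Omega : Type) (sigma : Omega -> option nat) (t : nat) : set Omega :=
  [set w | lt_opt t (sigma w)].

(** Payoff with the cemetery value Δ, encoded as [None]. *)
Definition Gv (Omega : Type) (R : Type) (G : nat -> Omega -> R)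
  (sigma : Omega -> option nat) (t : nat) (w : Omega) : option R :=
  if lt_opt t (sigma w) then Some (G t w) else None.

Definition geD (R : realType) (a b : option R) : bool :=
  match a, b with
  | Some x, Some y => (y <= x)%R
  | None, None => true
  | None, Some _ => false
  | Some _, None => true
  end.

(** s * v with the convention 0 * Δ = 0 (Δ only ever gets multiplied by 0). *)
Definition mulD (R : realType) (s : R) (v : option R) : R :=
  match v with None => 0 | Some x => s * x end.

Definition is_cexp (R : realType) (d : measure_display) (Omega : measurableType d)
  (P : probability Omega R) (G : set (set Omega)) (X Y : Omega -> R) : Prop :=
  [/\ P.-integrable setT (EFin \o X),
      P.-integrable setT (EFin \o Y),
      (forall B : set R, measurable B -> G (Y @^-1` B)) &
      (forall A, G A -> (\int[P]_(w in A) (Y w)%:E = \int[P]_(w in A) (X w)%:E)%E)].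

Definition filtration d (Omega : measurableType d) (F : nat -> set (set Omega)) : Prop :=
  [/\ (forall t, sigma_algebra setT (F t)),
      (forall t, F t `<=` measurable) &
      (forall s t, (s <= t)%N -> F s `<=` F t)].

Definition stopping_time (Omega : Type) (F : nat -> set (set Omega))
  (sigma : Omega -> option nat) : Prop :=
  forall t, F t (~` Dset sigma t).

(** T_e = T ∧ inf{0 <= t < T : p_t = 0}, p_t a version of P(D_{t+1} | F_t). *)
Definition Te (Omega : Type) (R : realType) (T : nat) (p : nat -> Omega -> R)
  (w : Omega) : nat :=
  find (fun t => p t w == 0) (iota 0 T).

(** L_t θ = inf{ s > t : θ_s = 1 }, s ranging over {0,...,T}; None = ∞. *)
Definition Lt (Omega : Type) (T : nat) (theta : nat -> Omega -> bool) (t : nat)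
  (w : Omega) : option nat :=
  let k := find (fun s => theta s w) (iota t.+1 (T - t)) in
  if (k < T - t)%N then Some (t.+1 + k)%N else None.

Definition admissible (R : realType) d (Omega : measurableType d)
  (P : probability Omega R) (F : nat -> set (set Omega)) (sigma : Omega -> option nat)
  (T : nat) (Te : Omega -> nat) (theta : nat -> Omega -> bool) : Prop :=
  [/\ (forall t, (t <= T)%N -> F t [set w | theta t w]),
      (forall t, (t < T)%N -> exists q : Omega -> R,
          is_cexp P (F t) (indic [set w | lhd (Lt T theta t w) (sigma w)]) q /\
          {ae P, forall w, (t < Te w)%N -> 0 < q w}) &
      (forall t w, (t <= T)%N -> (Te w <= t)%N -> theta t w)].

(** G_{L_t θ} 1_{L_t θ ◁ σ} (set to 0 when L_t θ = ∞, which only happens for t = T). *)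
Definition stopped_payoff (Omega : Type) (R : realType) (G : nat -> Omega -> R)
  (sigma : Omega -> option nat) (T : nat) (theta : nat -> Omega -> bool) (t : nat)
  (w : Omega) : R :=
  match Lt T theta t w with
  | Some s => if lhd (Some s) (sigma w) then G s w else 0
  | None => 0
  end.

From HB Require Import structures.
From mathcomp Require Import all_boot all_order all_algebra.
From mathcomp Require Import all_classical all_reals all_analysis.
From mathcomp Require Import measurable_realfun.
Import Order.TTheory GRing.Theory Num.Theory.
Local Open Scope classical_set_scope.
Local Open Scope ring_scope.

(* On {θ_{t+1}} one has L_t θ = t+1, S_{t+1} = 1_{D_{t+1}} and
   S_{t+1} V_{t+1} = G_{t+1} 1_{D_{t+1}}; off {θ_{t+1}} one has L_t θ = L_{t+1} θ and, by
   induction, S_{t+1} and S_{t+1} V_{t+1} have the same F_{t+1}-integrals as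
   1_{L_{t+1} θ ◁ σ} and G_{L_{t+1} θ} 1_{L_{t+1} θ ◁ σ}.  As {θ_{t+1}} ∈ F_{t+1}, the tower
   property identifies E[S_{t+1} | F_t] and E[S_{t+1} V_{t+1} | F_t] with the conditional
   survival probability and the conditional expected payoff of θ after t.
   E[S_{t+1} | F_t] > 0 on {t < T_e}: on the F_t-set where it vanishes S_{t+1} = 0 a.s.,
   whereas S_{t+1} > 0 on D_{t+1}, so that set a.s. misses D_{t+1}, which P(D_{t+1} | F_t) > 0
   on {t < T_e} allows only if it is null.  Hence S_t V_t = E[S_{t+1} | F_t] J_t
   = E[S_{t+1} V_{t+1} | F_t] off {θ_t}, which closes the induction. *)

Lemma measurable_int_EFin {R : realType} {d : measure_display} {Omega : measurableType d}
  {mu : set Omega -> \bar R} {f : Omega -> R} :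
  mu.-integrable setT (EFin \o f) -> measurable_fun setT f.
Proof. by move/measurable_int/measurable_EFinP. Qed.

Section integral_lemmas.
Context {R : realType} {d : measure_display} {Omega : measurableType d}
  (mu : {measure set Omega -> \bar R}).
Implicit Types (A Z : set Omega) (f : Omega -> R).

Lemma ae_not_measure0 {A} : measurable A -> {ae mu, forall w, ~ A w} -> mu A = 0%E.
Proof.
move=> mA [N [mN N0 sub]].
apply/eqP; rewrite -measure_le0 -N0 le_measure ?inE //.
by move=> w Aw; apply: sub.
Qed.

Lemma integral_fin_le0 Z f :
  (forall w, Z w -> f w <= 0) -> (\int[mu]_(w in Z) (f w)%:E <= 0)%E.
Proof.
move=> f_le0.
have : (\int[mu]_(w in Z) - ((- f w)%:E) = - \int[mu]_(w in Z) (- f w)%:E)%E.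
  by apply: integral_ge0N => w Zw; rewrite lee_fin oppr_ge0; exact: f_le0.
under eq_integral do rewrite EFinN oppeK.
move=> ->; rewrite leeNl oppe0; apply: integral_ge0 => w Zw.
by rewrite lee_fin oppr_ge0; exact: f_le0.
Qed.

Lemma ae_eq0_integral_le0 {Z f} : measurable Z -> measurable_fun setT f ->
  {ae mu, forall w, Z w -> 0 <= f w} ->
  (\int[mu]_(w in Z) (f w)%:E <= 0)%E -> {ae mu, forall w, Z w -> f w = 0}.
Proof.
move=> mZ mf f_ge0 intf_le0.
have mfZ : measurable_fun Z (EFin \o f).
  by apply: measurableT_comp => //; exact: measurable_funS mf.
have int_abs : (\int[mu]_(w in Z) `|(EFin \o f) w| = \int[mu]_(w in Z) (f w)%:E)%E.
  apply: ae_eq_integral => //; first exact: measurableT_comp.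
  by apply: filterS f_ge0 => w f_ge0w Zw /=; rewrite ger0_norm // f_ge0w.
have : (\int[mu]_(w in Z) `|(EFin \o f) w| = 0)%E.
  apply/le_anti/andP; split; first by rewrite int_abs.
  by apply: integral_ge0 => w _; exact: abse_ge0.
move/(ae_eq_integral_abs mu mZ mfZ).
by apply: filterS => w f0 Zw; have [] := f0 Zw.
Qed.

Lemma ae_ge0_integral_ge0 {G : set (set Omega)} {f} :
  G `<=` measurable -> measurable_fun setT f ->
  (forall B, measurable B -> G (f @^-1` B)) ->
  (forall A, G A -> (0 <= \int[mu]_(w in A) (f w)%:E)%E) ->
  {ae mu, forall w, 0 <= f w}.
Proof.
move=> GM mf Gf intf_ge0.
pose Z := f @^-1` `]-oo, 0[.
have GZ : G Z by apply: Gf.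
have : {ae mu, forall w, Z w -> - f w = 0}.
  apply: ae_eq0_integral_le0; first exact: GM.
  - exact: measurableT_comp.
  - by apply: aeW => w; rewrite /Z /= in_itv /= oppr_ge0 => /ltW.
  have : (\int[mu]_(w in Z) - ((- f w)%:E) = - \int[mu]_(w in Z) (- f w)%:E)%E.
    apply: integral_ge0N => w; rewrite /Z /= in_itv /= => fw_lt0.
    by rewrite lee_fin oppr_ge0 ltW.
  under eq_integral do rewrite EFinN oppeK.
  by move=> eqZ; rewrite -[leLHS]oppeK -eqZ leeNl oppe0 intf_ge0.
apply: filterS => w Zf0; rewrite leNgt; apply/negP => fw_lt0.
have /eqP : - f w = 0 by apply: Zf0; rewrite /Z /= in_itv.
by rewrite oppr_eq0 => /eqP fw0; rewrite fw0 ltxx in fw_lt0.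
Qed.

Lemma eq_integral_split {A} {B : set Omega} {f g : Omega -> \bar R} :
  measurable A -> measurable B -> measurable_fun A f -> measurable_fun A g ->
  (\int[mu]_(w in A `&` B) f w = \int[mu]_(w in A `&` B) g w)%E ->
  (\int[mu]_(w in A `&` ~` B) f w = \int[mu]_(w in A `&` ~` B) g w)%E ->
  (\int[mu]_(w in A) f w = \int[mu]_(w in A) g w)%E.
Proof.
move=> mA mB mf mg eqB eqBc.
have eA : A = (A `&` B) `|` (A `&` ~` B) by rewrite -setDE setUIDK.
have mAB : measurable (A `&` B) by exact: measurableI.
have mABc : measurable (A `&` ~` B) by apply: measurableI => //; exact: measurableC.
have AB_ABc : [disjoint A `&` B & A `&` ~` B].
  by apply/disj_set2P; apply/seteqP; split => x // [[_ ?] [_ ?]].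
by rewrite eA !integral_setU // -?eA // eqB eqBc.
Qed.

End integral_lemmas.

Section conditional_expectation.
Context {R : realType} {d : measure_display} {Omega : measurableType d}
  (P : probability Omega R).

Lemma g_measurable_funP (G : set (set Omega)) (f : Omega -> R) : sigma_algebra setT G ->
  measurable_fun setT (f : g_sigma_algebraType G -> R) <->
  (forall B, measurable B -> G (f @^-1` B)).
Proof.
move=> sG; split => [mf B mB|Gf _ B mB].
- by rewrite -(measurable_g_measurableTypeE sG) -[_ @^-1` _]setTI; exact: mf.
- by rewrite setTI (measurable_g_measurableTypeE sG); exact: Gf.
Qed.

Lemma is_cexp_unique {G : set (set Omega)} {X Y1 Y2 : Omega -> R} :
  sigma_algebra setT G -> G `<=` measurable ->
  is_cexp P G X Y1 -> is_cexp P G X Y2 -> {ae P, forall w, Y1 w = Y2 w}.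
Proof.
move=> sG GM.
suff le_Y (Ya Yb : Omega -> R) : is_cexp P G X Ya -> is_cexp P G X Yb ->
    {ae P, forall w, 0 <= Ya w - Yb w}.
  move=> cY1 cY2; apply: filterS2 (le_Y _ _ cY1 cY2) (le_Y _ _ cY2 cY1) => w.
  by rewrite !subr_ge0 => ? ?; apply/le_anti/andP.
move=> [iX iYa mYa eYa] [_ iYb mYb eYb].
apply: (ae_ge0_integral_ge0 P (f := fun w => Ya w - Yb w) GM).
- by apply: measurable_funB; [exact: measurable_int_EFin iYa|exact: measurable_int_EFin iYb].
- by apply/g_measurable_funP => //; apply: measurable_funB; exact/g_measurable_funP.
move=> A GA; have mA := GM _ GA.
have iA (Y : Omega -> R) : P.-integrable setT (EFin \o Y) -> P.-integrable A (EFin \o Y).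
  exact: integrableS.
under eq_integral do rewrite EFinB.
rewrite integralB_EFin ?iA // eYa // eYb // subee //.
exact: integrable_fin_num (iA _ iX).
Qed.

End conditional_expectation.

Lemma measurable_inv {R : realType} : measurable_fun setT (@GRing.inv R).
Proof.
have -> : [set: R] = [set 0] `|` [set x : R | x != 0].
  by apply/seteqP; split => x //= _; case: (eqVneq x 0) => h; [left|right].
apply/measurable_funU => //; first by apply: open_measurable; exact: open_neq.
split; first exact: measurable_fun_set1.
apply: open_continuous_measurable_fun; first exact: open_neq.
by move=> x; rewrite inE /= => x0; exact: inv_continuous.
Qed.

Lemma eq_indic_at (R : pzRingType) (T : Type) (A B : set T) (w : T) :
  (A w <-> B w) -> (indic A w : R) = indic B w.
Proof.
move=> AB; rewrite /indic (_ : (w \in A) = (w \in B)) //.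
by apply/idP/idP => /set_mem/AB/mem_set.
Qed.

Lemma downward_induction (n : nat) (Q : nat -> Prop) :
  Q n -> (forall t, (t < n)%N -> Q t.+1 -> Q t) -> forall t, (t <= n)%N -> Q t.
Proof.
move=> Qn QS t tn; rewrite -(subKn tn).
elim: (n - t)%N => [|k IH]; first by rewrite subn0.
have [kn|nk] := ltnP k n.
  by apply: QS; [rewrite ltn_subrL (leq_ltn_trans (leq0n k) kn)|rewrite subnSK].
have /eqP -> : (n - k.+1 == 0)%N by rewrite subn_eq0 leqW.
by have /eqP <- : (n - k == 0)%N by rewrite subn_eq0.
Qed.

Lemma geDxx (R : realType) (x : option R) : geD x x.
Proof. by case: x => //= r; rewrite lexx. Qed.

Lemma lhd_Some (s : nat) (u : option nat) : lhd (Some s) u = lt_opt s u.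
Proof. by case: u. Qed.

Section effective_horizon.
Context {Omega : Type} {R : realType} (T : nat) (p : nat -> Omega -> R).

Lemma Te_le w : (Te T p w <= T)%N.
Proof. by rewrite /Te -[leqRHS](size_iota 0 T) find_size. Qed.

Lemma ltn_TeP t w :
  (t < Te T p w)%N <-> (t < T)%N /\ (forall s, (s <= t)%N -> p s w != 0).
Proof.
split=> [tTe|[tT p_neq0]].
  split=> [|s st]; first exact: leq_trans tTe (Te_le w).
  have sTe := leq_ltn_trans st tTe.
  by have := before_find 0%N sTe; rewrite nth_iota ?add0n ?(leq_trans sTe (Te_le w)) // => ->.
rewrite ltnNge; apply/negP => Tet.
have has_p0 : has (fun t => p t w == 0) (iota 0 T).
  by rewrite has_find size_iota (leq_ltn_trans Tet tT).
have := nth_find 0%N has_p0; rewrite nth_iota ?add0n ?(leq_ltn_trans Tet tT) //.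
by move/eqP => p0; have := p_neq0 _ Tet; rewrite p0 eqxx.
Qed.

End effective_horizon.

Definition survives {Omega : Type} (T : nat) (sigma : Omega -> option nat)
  (th : nat -> Omega -> bool) (t : nat) : set Omega :=
  [set w | lhd (Lt T th t w) (sigma w)].

Definition Galive {Omega : Type} {R : realType} (sigma : Omega -> option nat)
  (G : nat -> Omega -> R) (t : nat) (w : Omega) : R :=
  if lt_opt t (sigma w) then G t w else 0.

Section stopping_policy.
Context {Omega : Type} {R : realType} {T : nat} {sigma : Omega -> option nat}
  {G : nat -> Omega -> R} {th : nat -> Omega -> bool}.

Lemma LtS t w : (t < T)%N ->
  Lt T th t w = if th t.+1 w then Some t.+1 else Lt T th t.+1 w.
Proof.
move=> tT; rewrite /Lt -subnSK //= -/(iota t.+2 (T - t.+1)).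
by case: (th t.+1 w) => /=; rewrite ?addn0 // ltnS addnS; case: ifP.
Qed.

Lemma Lt_last w : Lt T th T w = None.
Proof. by rewrite /Lt subnn. Qed.

Lemma Lt_le t w s : Lt T th t w = Some s -> (s <= T)%N.
Proof. by rewrite /Lt; case: ifP => // + [<-]; rewrite addSn -ltn_subRL. Qed.

Lemma survivesS t : (t < T)%N ->
  survives T sigma th t = ([set w | th t.+1 w] `&` Dset sigma t.+1) `|`
                          (~` [set w | th t.+1 w] `&` survives T sigma th t.+1).
Proof.
move=> tT; apply/seteqP; split => w; rewrite /survives /= (LtS t w tT).
  by case: ifP => thw; rewrite ?lhd_Some; [left|right].
by case=> [[-> Dw]|[/negP/negbTE -> Sw]]; rewrite ?lhd_Some.
Qed.

Lemma indic_survivesS t w : (t < T)%N ->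
  indic (survives T sigma th t) w =
  if th t.+1 w then indic (Dset sigma t.+1) w else indic (survives T sigma th t.+1) w :> R.
Proof.
by move=> tT; case: ifP => thw; apply: eq_indic_at; rewrite /survives /= (LtS t w tT) thw ?lhd_Some.
Qed.

Lemma stopped_payoffE t w :
  stopped_payoff G sigma T th t w = if Lt T th t w is Some s then Galive sigma G s w else 0.
Proof. by rewrite /stopped_payoff; case: (Lt T th t w) => // s; rewrite lhd_Some. Qed.

Lemma stopped_payoffS t w : (t < T)%N ->
  stopped_payoff G sigma T th t w =
  if th t.+1 w then Galive sigma G t.+1 w else stopped_payoff G sigma T th t.+1 w.
Proof. by move=> tT; rewrite !stopped_payoffE LtS //; case: (th t.+1 w). Qed.

End stopping_policy.

Section backward_recursion.
Context {R : realType} {d : measure_display} {Omega : measurableType d}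
  {P : probability Omega R} {F : nat -> set (set Omega)} {T : nat}
  {sigma : Omega -> option nat} {G : nat -> Omega -> R}
  {p : nat -> Omega -> R} {ES ESV J Sp : nat -> Omega -> R}
  {V : nat -> Omega -> option R}.

Local Notation D := (Dset sigma).
Local Notation te := (Te T p).
Local Notation gF t := (g_sigma_algebraType (F t)).

Hypothesis filtrationF : filtration F.
Hypothesis stopping_sigma : stopping_time F sigma.
Hypothesis measurable_G : forall t (B : set R), (t <= T)%N -> measurable B ->
  F t (D t `&` G t @^-1` B).
Hypothesis integrable_Gmax :
  (\int[P]_w (\big[Num.max/0]_(t < T.+1) (`|G t w| * indic (D t) w))%:E < +oo)%E.
Hypothesis p_cexp : forall t, (t < T)%N -> is_cexp P (F t) (indic (D t.+1)) (p t).
Hypothesis ES_cexp : forall t, (t < T)%N -> is_cexp P (F t) (Sp t.+1) (ES t).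
Hypothesis ESV_cexp : forall t, (t < T)%N ->
  is_cexp P (F t) (fun w => mulD (Sp t.+1 w) (V t.+1 w)) (ESV t).
Hypothesis recursion : forall t w, (t <= T)%N ->
  if (t < te w)%N then
    J t w = ESV t w / ES t w /\
    (if geD (Gv G sigma t w) (Some (J t w))
     then V t w = Gv G sigma t w /\ Sp t w = 1
     else V t w = Some (J t w) /\ Sp t w = ES t w)
  else V t w = Gv G sigma t w /\ Sp t w = indic (D t) w.

Definition theta t w := geD (Gv G sigma t w) (V t w).

Local Notation survival := (survives T sigma theta).
Local Notation payoff := (stopped_payoff G sigma T theta).

Let F_sigma_algebra t : sigma_algebra setT (F t). Proof. by case: filtrationF. Qed.
Let F_measurable {t A} : F t A -> measurable A. Proof. by case: filtrationF => _ + _; apply. Qed.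
Let F_incr {s t A} : (s <= t)%N -> F s A -> F t A.
Proof. by move=> st; case: filtrationF => _ _; apply. Qed.

Let gF_measurableE t (A : set Omega) : measurable (A : set (gF t)) = F t A.
Proof. by rewrite (measurable_g_measurableTypeE (F_sigma_algebra t)). Qed.

Let FsetI {t} {A B : set Omega} : F t A -> F t B -> F t (A `&` B).
Proof. by rewrite -!gF_measurableE; exact: measurableI. Qed.

Let FsetC {t} {A : set Omega} : F t A -> F t (~` A).
Proof. by rewrite -!gF_measurableE; exact: measurableC. Qed.

Let gF_measurable_fun {t} {f : Omega -> R} :
  measurable_fun setT (f : gF t -> R) -> measurable_fun setT f.
Proof. by move/g_measurable_funP => Ff _ B mB; rewrite setTI; exact/F_measurable/Ff. Qed.

Let is_cexp_gF_measurable t (X Y : Omega -> R) :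
  is_cexp P (F t) X Y -> measurable_fun setT (Y : gF t -> R).
Proof. by case=> _ _ FY _; exact/g_measurable_funP. Qed.

Lemma recursion_ge_Te {t w} : (t <= T)%N -> (te w <= t)%N ->
  V t w = Gv G sigma t w /\ Sp t w = indic (D t) w.
Proof. by move=> tT Tet; have := recursion t w tT; rewrite ltnNge Tet. Qed.

Lemma recursion_lt_Te {t w} : (t <= T)%N -> (t < te w)%N ->
  [/\ J t w = ESV t w / ES t w,
      theta t w = geD (Gv G sigma t w) (Some (J t w)),
      theta t w -> V t w = Gv G sigma t w /\ Sp t w = 1 &
      ~~ theta t w -> V t w = Some (J t w) /\ Sp t w = ES t w].
Proof.
move=> tT tTe; have := recursion t w tT; rewrite tTe => -[eJ].
by rewrite /theta; case: ifP => GJ [-> ->]; split; rewrite ?geDxx ?GJ.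
Qed.

Lemma theta_ge_Te {t w} : (t <= T)%N -> (te w <= t)%N -> theta t w.
Proof. by move=> tT Tet; rewrite /theta (recursion_ge_Te tT Tet).1 geDxx. Qed.

Lemma thetaT w : theta T w.
Proof. exact: theta_ge_Te (leqnn T) (Te_le T p w). Qed.

Lemma lt_Te_of_not_theta {t w} : (t <= T)%N -> ~~ theta t w -> (t < te w)%N.
Proof. by move=> tT; apply: contraNT; rewrite -leqNgt; exact: theta_ge_Te. Qed.

Lemma theta_alive {t w} : (t <= T)%N -> (t < te w)%N -> theta t w -> D t w.
Proof.
move=> tT tTe; have [_ -> _ _] := recursion_lt_Te tT tTe.
by rewrite /Gv /Dset /=; case: (lt_opt t (sigma w)).
Qed.

Lemma SpE t w : (t <= T)%N -> Sp t w = if theta t w then indic (D t) w else ES t w.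
Proof.
move=> tT; have [tTe|Tet] := ltnP t (te w); last first.
  by rewrite theta_ge_Te // (recursion_ge_Te tT Tet).2.
have [_ _ thS nthS] := recursion_lt_Te tT tTe.
case: ifP => [th|/negbT nth]; last by rewrite (nthS nth).2.
by rewrite (thS th).2 /indic mem_set //; exact: theta_alive.
Qed.

Lemma SpVE t w : (t <= T)%N -> mulD (Sp t w) (V t w) =
  if theta t w then Galive sigma G t w else ES t w * (ESV t w / ES t w).
Proof.
move=> tT; have [tTe|Tet] := ltnP t (te w); last first.
  rewrite theta_ge_Te //; have [-> ->] := recursion_ge_Te tT Tet.
  by rewrite /Gv /Galive /indic /Dset; case: ifP => Dw /=; rewrite ?mem_set ?mul1r.
have [eJ _ thS nthS] := recursion_lt_Te tT tTe.
case: ifP => [th|/negbT nth]; last by have [-> ->] := nthS nth; rewrite /= eJ.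
have [-> ->] := thS th; have := theta_alive tT tTe th.
by rewrite /Gv /Galive /Dset /= => ->; rewrite /= mul1r.
Qed.

Lemma D_F t : F t (D t).
Proof. by rewrite -[D t]setCK; exact: FsetC (stopping_sigma t). Qed.

Lemma Te_F t : F t [set w | (t < te w)%N].
Proof.
have p_neq0 s : (s < T)%N -> F s (p s @^-1` [set x | x != 0]).
  by move=> sT; case: (p_cexp s sT) => _ _ + _; apply; apply: open_measurable; exact: open_neq.
have [tT|Tt] := ltnP t T; last first.
  suff -> : [set w | (t < te w)%N] = set0 by rewrite -gF_measurableE.
  apply/seteqP; split => w //= tTe.
  by have := leq_trans tTe (Te_le T p w); rewrite ltnNge Tt.
elim: t tT => [|t IH] tT.
  suff -> : [set w | (0 < te w)%N] = p 0%N @^-1` [set x | x != 0] by exact: p_neq0.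
  apply/seteqP; split => w /=; first by case/ltn_TeP => _; apply.
  by move=> p0; apply/ltn_TeP; split => // s; rewrite leqn0 => /eqP ->.
suff -> : [set w | (t.+1 < te w)%N] =
    [set w | (t < te w)%N] `&` p t.+1 @^-1` [set x | x != 0].
  by apply: FsetI; [exact/(F_incr (leqnSn t))/IH/ltnW|exact: p_neq0].
apply/seteqP; split => w /=.
  move/ltn_TeP => [tT' pw]; split; last exact: pw.
  by apply/ltn_TeP; split => [|s st]; [exact: ltnW|apply: pw; exact: leqW].
move=> [/ltn_TeP [_ pw] pw1]; apply/ltn_TeP; split => // s.
by rewrite leq_eqVlt => /orP[/eqP ->|/pw].
Qed.

Lemma Galive_measurable {t} : (t <= T)%N -> measurable_fun setT (Galive sigma G t : gF t -> R).
Proof.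
move=> tT; apply: measurable_fun_if => //.
- apply: (measurable_fun_bool true) => //.
  by rewrite setTI gF_measurableE; exact: D_F.
- by move=> _ B mB; rewrite setTI gF_measurableE; exact: measurable_G.
Qed.

Lemma theta_F {t} : (t <= T)%N -> F t [set w | theta t w].
Proof.
move=> tT; have [tT'|Tt] := ltnP t T; last first.
  have -> : [set w | theta t w] = setT.
    by apply/seteqP; split => w //= _; apply: theta_ge_Te; rewrite // (leq_trans (Te_le T p w)).
  by rewrite -gF_measurableE.
pose Jt w := ESV t w * (ES t w)^-1.
suff -> : [set w | theta t w] = ~` [set w | (t < te w)%N] `|`
    ([set w | (t < te w)%N] `&` D t `&`
     (fun w => Jt w <= Galive sigma G t w) @^-1` [set true]).
  rewrite -gF_measurableE; apply: measurableU; rewrite gF_measurableE.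
    exact: FsetC (Te_F t).
  apply: FsetI; first exact: FsetI (Te_F t) (D_F t).
  rewrite -gF_measurableE -[_ @^-1` _]setTI; apply: measurable_fun_ler => //.
    apply: measurable_funM; first exact: is_cexp_gF_measurable (ESV_cexp t tT').
    apply: measurableT_comp; first exact: measurable_inv.
    exact: is_cexp_gF_measurable (ES_cexp t tT').
  exact: Galive_measurable.
apply/seteqP; split => w /=.
  have [tTe|] := ltnP t (te w); last by left.
  have [eJ -> _ _] := recursion_lt_Te tT tTe.
  rewrite /Gv /Galive /Dset /= /Jt -eJ; case: (lt_opt t (sigma w)) => //= GJ.
  by right.
case=> [/negP|[[tTe Dw] GJ]]; first by rewrite -leqNgt; exact: theta_ge_Te.
have [eJ -> _ _] := recursion_lt_Te tT tTe.
by move: Dw GJ; rewrite /Gv /Galive /Dset /Jt /= -eJ => ->.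
Qed.

Lemma survival_measurable {t} : (t <= T)%N -> measurable (survival t).
Proof.
move: t; apply: downward_induction => [|t tT mS].
  suff -> : survival T = \bigcap_n D n.
    by apply: bigcapT_measurable => n; exact: F_measurable (D_F n).
  apply/seteqP; split => w; rewrite /survives /= Lt_last /=.
    by case E: (sigma w) => //= _ n _; rewrite /Dset /= E.
  by move=> Dw; case E: (sigma w) => [b|] //=; have := Dw b I; rewrite /Dset /= E /= ltnn.
have mtheta := F_measurable (theta_F tT).
rewrite survivesS //; apply: measurableU; apply: measurableI => //.
  exact: F_measurable (D_F _).
exact: measurableC.
Qed.

Lemma payoff_measurable {t} : (t <= T)%N -> measurable_fun setT (payoff t).
Proof.
move: t; apply: downward_induction => [|t tT mS].
  rewrite (_ : payoff T = cst 0); first exact: measurable_cst.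
  by apply/funext => w; rewrite stopped_payoffE Lt_last.
rewrite (_ : payoff t =
    fun w => if theta t.+1 w then Galive sigma G t.+1 w else payoff t.+1 w).
  apply: measurable_fun_ifT => //; last exact: gF_measurable_fun (Galive_measurable tT).
  by apply: (measurable_fun_bool true); rewrite setTI; exact: F_measurable (theta_F tT).
by apply/funext => w; rewrite stopped_payoffS.
Qed.

Let Gmax w := \big[Num.max/0]_(s < T.+1) (`|G s w| * indic (D s) w).

Let abs_Galive s w : `|G s w| * indic (D s) w = `|Galive sigma G s w|.
Proof.
rewrite /Galive indicE; case: (boolP (w \in D s)) => [/set_mem|/negP Dw].
  by rewrite mulr1 /Dset /= => ->.
by rewrite mulr0 ifN ?normr0 //; apply/negP => Dw'; apply: Dw; exact: mem_set.
Qed.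

Let Gmax_ge0 w : 0 <= Gmax w.
Proof.
by apply: (big_ind (fun x : R => 0 <= x)) => // x y x0 _; rewrite le_max x0.
Qed.

Lemma Gmax_integrable : P.-integrable setT (EFin \o Gmax).
Proof.
have mGmax : measurable_fun setT Gmax.
  rewrite (_ : Gmax = \big[(fun f g => f \max g)/cst 0]_(s < T.+1)
                        (fun w => `|Galive sigma G s w|)).
    apply: (big_ind (fun f : Omega -> R => measurable_fun setT f)) => //.
    - by move=> f g; exact: measurable_maxr.
    - move=> s _; apply: measurableT_comp; first exact: normr_measurable.
      have sT : (s <= T)%N by rewrite -ltnS.
      exact: gF_measurable_fun (Galive_measurable sT).
  apply/funext => w; rewrite /Gmax; under eq_bigr do rewrite abs_Galive.
  by elim/big_rec2: _ => // s y f _ ->.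
apply/integrableP; split; first exact/measurable_EFinP.
rewrite (eq_integral (fun w => (Gmax w)%:E)) //.
by move=> w _ /=; rewrite ger0_norm.
Qed.

Lemma abs_payoff_le_Gmax t w : `|payoff t w| <= Gmax w.
Proof.
rewrite stopped_payoffE; case E: (Lt T theta t w) => [s|]; last by rewrite normr0.
have sT : (s < T.+1)%N by rewrite ltnS; exact: Lt_le E.
rewrite -abs_Galive.
exact: (le_bigmax _ (fun i : 'I_T.+1 => `|G i w| * indic (D i) w) (Ordinal sT)).
Qed.

Lemma payoff_integrable {t} : (t <= T)%N -> P.-integrable setT (EFin \o payoff t).
Proof.
move=> tT; apply: le_integrable Gmax_integrable => //.
  exact/measurable_EFinP/payoff_measurable.
by move=> w _ /=; rewrite lee_fin (ger0_norm (Gmax_ge0 w)) abs_payoff_le_Gmax.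
Qed.

Lemma p_gt0 {t} : (t < T)%N -> {ae P, forall w, (t < te w)%N -> 0 < p t w}.
Proof.
move=> tT; case: (p_cexp t tT) => _ ip Fp ep.
have : {ae P, forall w, 0 <= p t w}.
  apply: (ae_ge0_integral_ge0 P (@F_measurable t)) => //.
    exact: measurable_int_EFin ip.
  by move=> A FA; rewrite ep //; apply: integral_ge0 => w _; rewrite lee_fin indicE ler0n.
apply: filterS => w p_ge0 /ltn_TeP [_ p_neq0].
by rewrite lt_neqAle eq_sym p_neq0.
Qed.

Lemma ae_not_of_null_Dsucc {t} {Z : set Omega} : (t < T)%N -> F t Z ->
  (forall w, Z w -> (t < te w)%N) -> P (Z `&` D t.+1) = 0%E ->
  {ae P, forall w, ~ Z w}.
Proof.
move=> tT FZ Z_te PZD0; case: (p_cexp t tT) => _ ip _ ep.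
have p0 : {ae P, forall w, Z w -> p t w = 0}.
  apply: (ae_eq0_integral_le0 P (F_measurable FZ)).
  - exact: measurable_int_EFin ip.
  - by apply: filterS (p_gt0 tT) => w pw /Z_te/pw/ltW.
  rewrite ep // integral_indic; first by rewrite setIC le_eqVlt; apply/orP; left; apply/eqP.
    exact: F_measurable FZ.
  exact: F_measurable (D_F _).
apply: filterS2 p0 (p_gt0 tT) => w pw0 pw Zw.
by have := pw (Z_te _ Zw); rewrite pw0 // ltxx.
Qed.

(* Only sets where θ_s fails are tested, so that the invariant also holds at s = T, where
   S_T is not a conditional expectation. *)
Definition continuation_versions s := [/\
  forall A, F s A -> A `<=` [set w | ~~ theta s w] ->
    (\int[P]_(w in A) (Sp s w)%:E = \int[P]_(w in A) (indic (survival s) w)%:E)%E,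
  forall A, F s A -> A `<=` [set w | ~~ theta s w] ->
    (\int[P]_(w in A) (mulD (Sp s w) (V s w))%:E = \int[P]_(w in A) (payoff s w)%:E)%E &
  {ae P, forall w, 0 <= Sp s w /\ (D s w -> 0 < Sp s w)}].

Lemma continuation_versions_T : continuation_versions T.
Proof.
have no_A A : A `<=` [set w | ~~ theta T w] -> A = set0.
  by move=> sA; apply/seteqP; split => // w /sA; rewrite /= thetaT.
split => [A _ /no_A ->|A _ /no_A ->|]; rewrite ?integral_set0 //.
apply: aeW => w; rewrite SpE // thetaT indicE; split => [|/mem_set ->]; first exact: ler0n.
exact: ltr01.
Qed.

Lemma ES_cexp_survival {t} : (t < T)%N -> continuation_versions t.+1 ->
  is_cexp P (F t) (indic (survival t)) (ES t).
Proof.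
move=> tT [Sp_cont _ _]; case: (ES_cexp t tT) => iSp iES FES eES.
split => //; first exact/integrable_indic/survival_measurable/ltnW.
move=> A FA; rewrite eES //.
have Ftheta := theta_F tT.
apply: (eq_integral_split P (F_measurable FA) (F_measurable Ftheta)).
- exact: measurable_funTS (measurable_int _ iSp).
- apply/measurable_funTS/(measurable_int P).
  exact/integrable_indic/survival_measurable/ltnW.
- apply: eq_integral => w /[!inE] -[_ /= th1].
  by rewrite SpE // (indic_survivesS t w tT) th1.
rewrite Sp_cont; first last.
- by move=> w [_ /negP].
- exact: FsetI (F_incr (leqnSn t) FA) (FsetC Ftheta).
apply: eq_integral => w /[!inE] -[_ /negP/negbTE th1].
by rewrite (indic_survivesS t w tT) th1.
Qed.

Lemma ESV_cexp_payoff {t} : (t < T)%N -> continuation_versions t.+1 ->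
  is_cexp P (F t) (payoff t) (ESV t).
Proof.
move=> tT [_ SpV_cont _]; case: (ESV_cexp t tT) => iSpV iESV FESV eESV.
split => //; first exact/payoff_integrable/ltnW.
move=> A FA; rewrite eESV //.
have Ftheta := theta_F tT.
apply: (eq_integral_split P (F_measurable FA) (F_measurable Ftheta)).
- exact: measurable_funTS (measurable_int _ iSpV).
- exact/measurable_funTS/measurable_EFinP/(payoff_measurable (ltnW tT)).
- apply: eq_integral => w /[!inE] -[_ /= th1].
  by rewrite SpVE // (stopped_payoffS t w tT) th1.
rewrite SpV_cont; first last.
- by move=> w [_ /negP].
- exact: FsetI (F_incr (leqnSn t) FA) (FsetC Ftheta).
apply: eq_integral => w /[!inE] -[_ /negP/negbTE th1].
by rewrite (stopped_payoffS t w tT) th1.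
Qed.

Lemma ES_gt0 {t} : (t < T)%N -> continuation_versions t.+1 ->
  {ae P, forall w, (t < te w)%N -> 0 < ES t w}.
Proof.
move=> tT [_ _ Sp_pos]; case: (ES_cexp t tT) => iSp _ FES eES.
pose Z := [set w | ES t w <= 0] `&` [set w | (t < te w)%N].
have FZ : F t Z.
  apply: FsetI (Te_F t); rewrite (_ : [set w | ES t w <= 0] = ES t @^-1` `]-oo, 0]).
    by apply: FES; exact: measurable_itv.
  by apply/seteqP; split => w; rewrite /= in_itv.
have Sp0 : {ae P, forall w, Z w -> Sp t.+1 w = 0}.
  apply: (ae_eq0_integral_le0 P (F_measurable FZ)).
  - exact: measurable_int_EFin iSp.
  - by apply: filterS Sp_pos => w [Sp_ge0 _] _.
  - by rewrite -eES //; apply: integral_fin_le0 => w [].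
have : {ae P, forall w, ~ Z w}.
  apply: (ae_not_of_null_Dsucc tT FZ); first by move=> w [].
  apply: (ae_not_measure0 P); first exact: measurableI (F_measurable FZ) (F_measurable (D_F _)).
  apply: filterS2 Sp0 Sp_pos => w Sp0w [_ Spw] [Zw Dw].
  by have := Spw Dw; rewrite Sp0w // ltxx.
by apply: filterS => w notZ tTe; rewrite ltNge; apply/negP => ES_le0; exact: notZ.
Qed.

Lemma continuation_versionsS t : (t < T)%N -> continuation_versions t.+1 ->
  continuation_versions t.
Proof.
move=> tT IH; have tT' := ltnW tT.
have [_ iES _ eES] := ES_cexp_survival tT IH.
have [_ iESV _ eESV] := ESV_cexp_payoff tT IH.
have ES_pos := ES_gt0 tT IH.
split.
- move=> A FA sA; rewrite -eES //; apply: eq_integral => w /[!inE] /sA /negbTE th.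
  by rewrite SpE // th.
- move=> A FA sA; rewrite -eESV //.
  transitivity (\int[P]_(w in A) (ES t w * (ESV t w / ES t w))%:E)%E.
    by apply: eq_integral => w /[!inE] /sA /negbTE th; rewrite SpVE // th.
  have mES := measurable_int_EFin iES.
  apply: ae_eq_integral => //; first exact: F_measurable FA.
  + apply/measurable_funTS/measurable_EFinP/measurable_funM => //.
    apply: measurable_funM; first exact: measurable_int_EFin iESV.
    exact: measurableT_comp measurable_inv mES.
  + exact: measurable_funTS (measurable_int _ iESV).
  + apply: filterS ES_pos => w ESw /sA/(lt_Te_of_not_theta tT')/ESw ES_pos'.
    by rewrite /= mulrC divfK // gt_eqF.
- apply: filterS ES_pos => w ESw; rewrite SpE //; case: ifP => [_|/negbT nth].
    by rewrite indicE; split => [|/mem_set ->]; [exact: ler0n|exact: ltr01].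
  by have := ESw (lt_Te_of_not_theta tT' nth) => ES_pos'; split => //; exact: ltW.
Qed.

Lemma continuation_versions_all {t} : (t <= T)%N -> continuation_versions t.
Proof.
move: t; apply: downward_induction; first exact: continuation_versions_T.
exact: continuation_versionsS.
Qed.

Lemma theta_admissible : admissible P F sigma T te theta.
Proof.
split=> [t|t tT|t w]; [exact: theta_F|exists (ES t)|exact: theta_ge_Te].
have IH := continuation_versions_all tT.
by split; [exact: ES_cexp_survival|exact: ES_gt0].
Qed.

Lemma payoff_representation t : (t < T)%N ->
  (exists num, is_cexp P (F t) (payoff t) num) /\
  (forall num den, is_cexp P (F t) (payoff t) num ->
     is_cexp P (F t) (indic (survival t)) den ->
     {ae P, forall w, (t < te w)%N -> J t w = num w / den w /\ ES t w = den w}).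
Proof.
move=> tT; have IH := continuation_versions_all tT.
split=> [|num den num_cexp den_cexp]; first by exists (ESV t); exact: ESV_cexp_payoff.
have ESV_num := is_cexp_unique P (F_sigma_algebra t) (@F_measurable t)
  (ESV_cexp_payoff tT IH) num_cexp.
have ES_den := is_cexp_unique P (F_sigma_algebra t) (@F_measurable t)
  (ES_cexp_survival tT IH) den_cexp.
apply: filterS2 ESV_num ES_den => w <- <- tTe.
by have [-> _ _ _] := recursion_lt_Te (ltnW tT) tTe.
Qed.

Lemma Sp_representation t : (t <= T)%N ->
  forall q, is_cexp P (F t) (indic (survival t)) q ->
  {ae P, forall w, [/\ D t w -> ~~ theta t w -> Sp t w = q w,
                     D t w -> theta t w -> Sp t w = 1 &
                     ~ D t w -> Sp t w = 0]}.
Proof.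
move=> tT q q_cexp; have [tT'|Tt] := ltnP t T; last first.
  have -> : t = T by apply/eqP; rewrite eqn_leq tT.
  apply: aeW => w; rewrite SpE ?leqnn // thetaT indicE.
  by split => // [Dw _|nDw]; [rewrite mem_set|rewrite memNset].
have ES_q := is_cexp_unique P (F_sigma_algebra t) (@F_measurable t)
  (ES_cexp_survival tT' (continuation_versions_all tT')) q_cexp.
have dead_null : {ae P, forall w, ~ (~` D t `&` ~` [set w | theta t w]) w}.
  apply: (ae_not_of_null_Dsucc tT').
  - exact: FsetI (FsetC (D_F t)) (FsetC (theta_F tT)).
  - by move=> w [_ /negP]; exact: lt_Te_of_not_theta.
  rewrite (_ : _ `&` _ = set0) ?measure0 //.
  apply/seteqP; split => w // [[nDw _] D1w]; apply: nDw.
  by move: D1w; rewrite /Dset /=; case: (sigma w) => //= b /ltnW.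
apply: filterS2 ES_q dead_null => w ESq alive; rewrite SpE //.
split=> [Dw /negbTE ->|Dw ->|nDw] //; first by rewrite indicE mem_set.
case: ifP => [_|/negbT nth]; first by rewrite indicE memNset.
by case: alive; split => //; exact/negP.
Qed.

End backward_recursion.

Theorem lemma3p2 (R : realType) (d : measure_display) (Omega : measurableType d)
  (P : probability Omega R) (F : nat -> set (set Omega)) (T : nat)
  (sigma : Omega -> option nat) (G : nat -> Omega -> R)
  (p : nat -> Omega -> R) (ES ESV J Sp : nat -> Omega -> R)
  (V : nat -> Omega -> option R) :
  filtration F ->
  (forall A, F 0%N A -> A = set0 \/ A = setT) ->
  stopping_time F sigma ->
  P (Dset sigma 0) = 1%E ->
  (forall t (B : set R), (t <= T)%N -> measurable B ->
     F t (Dset sigma t `&` G t @^-1` B)) ->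
  (\int[P]_w (\big[Num.max/0]_(t < T.+1) (`|G t w| * indic (Dset sigma t) w))%:E
     < +oo)%E ->
  (* p t : a version of P(D_{t+1} | F_t), defining T_e *)
  (forall t, (t < T)%N -> is_cexp P (F t) (indic (Dset sigma t.+1)) (p t)) ->
  (* ES t, ESV t : versions of E[S_{t+1} | F_t] and E[S_{t+1} V_{t+1} | F_t] *)
  (forall t, (t < T)%N -> is_cexp P (F t) (Sp t.+1) (ES t)) ->
  (forall t, (t < T)%N ->
     is_cexp P (F t) (fun w => mulD (Sp t.+1 w) (V t.+1 w)) (ESV t)) ->
  (* the backward recursion *)
  (forall t w, (t <= T)%N ->
     if (t < Te T p w)%N then
       J t w = ESV t w / ES t w /\
       (if geD (Gv G sigma t w) (Some (J t w))
        then V t w = Gv G sigma t w /\ Sp t w = 1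
        else V t w = Some (J t w) /\ Sp t w = ES t w)
     else V t w = Gv G sigma t w /\ Sp t w = indic (Dset sigma t) w) ->
  let theta := fun t w => geD (Gv G sigma t w) (V t w) in
  [/\ admissible P F sigma T (Te T p) theta,
      (forall t, (t < T)%N ->
         (exists num : Omega -> R,
            is_cexp P (F t) (stopped_payoff G sigma T theta t) num) /\
         (forall num den : Omega -> R,
            is_cexp P (F t) (stopped_payoff G sigma T theta t) num ->
            is_cexp P (F t) (indic [set w | lhd (Lt T theta t w) (sigma w)]) den ->
            {ae P, forall w, (t < Te T p w)%N ->
                     J t w = num w / den w /\ ES t w = den w})) &
      (forall t, (t <= T)%N ->
         forall q : Omega -> R,
           is_cexp P (F t) (indic [set w | lhd (Lt T theta t w) (sigma w)]) q ->
           {ae P, forall w,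
              [/\ Dset sigma t w -> ~~ theta t w -> Sp t w = q w,
                  Dset sigma t w -> theta t w -> Sp t w = 1 &
                  ~ Dset sigma t w -> Sp t w = 0]})].
Proof.
move=> hF _ hsigma _ hG hGmax hp hES hESV hrec theta.
split; [exact: (theta_admissible hF hsigma hG hGmax hp hES hESV hrec)
       |exact: (payoff_representation hF hsigma hG hGmax hp hES hESV hrec)
       |exact: (Sp_representation hF hsigma hG hGmax hp hES hESV hrec)].
Qed.
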